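(* In noiseless non-adaptive group testing with $N$ items and $K$ defectives, with random Bernoulli$(1/K)$ design and maximum-likelihood decoding, in the regime $N,K\to\infty$ with $K=o(N)$, approximate reconstruction of the defective set with up to $\alpha K$ misses (for a fixed small $\alpha\in(0,1)$) is achievable with $T=O(K\log N)$ tests, i.e. the probability that the decoded $K$-set misses more than $\alpha K$ defectives can be made arbitrarily small.
   Context: Design: $N\times T$ binary matrix with i.i.d. Bernoulli$(1/K)$ entries, $X_j(t)=1$ iff item $j$ is in test $t$. Noiseless outcomes $Y(t)=\bigvee_{j\in S}X_j(t)$ for the defective set $S$, $|S|=K$. The ML decoder outputs a $K$-subset $S'$ maximizing $p(Y^T\mid\mathbf X_{S'})$; an error is declared only if $|S\setminus S'|>\alpha K$. Probabilities are averaged over the random design and over $S$ uniform among $K$-subsets. *)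

From HB Require Import structures.
From mathcomp Require Import all_boot all_order all_algebra.
From mathcomp Require Import all_classical all_reals all_analysis.
Set Implicit Arguments. Unset Strict Implicit. Unset Printing Implicit Defensive.
Import Order.TTheory GRing.Theory Num.Theory.
Local Open Scope ring_scope.

Section GroupTesting.
Variable R : realType.

(* A design: X (j, t) = true iff item j is in test t. *)
Definition design (N T : nat) := {ffun 'I_N * 'I_T -> bool}.

Definition outcome N T (X : design N T) (S : {set 'I_N}) : {ffun 'I_T -> bool} :=
  [ffun t => [exists j in S, X (j, t)]].

Definition lik N T (X : design N T) (S' : {set 'I_N}) (Y : {ffun 'I_T -> bool}) : R :=
  if outcome X S' == Y then 1 else 0.

Definition ksubsets N K : {set {set 'I_N}} := [set S : {set 'I_N} | #|S| == K].

Definition ML_output N T K (X : design N T) (Y : {ffun 'I_T -> bool}) (S' : {set 'I_N}) : bool :=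
  (S' \in ksubsets N K) && [forall S'' in ksubsets N K, lik X S'' Y <= lik X S' Y].

Definition design_prob N T K (X : design N T) : R :=
  \prod_(p : 'I_N * 'I_T) (if X p then (K%:R)^-1 else 1 - (K%:R)^-1).

Definition misses_too_many N K (alpha : R) (S S' : {set 'I_N}) : bool :=
  alpha * K%:R < #|S :\: S'|%:R.

(* Ties in the ML decoder are resolved adversarially: an error is counted if
   SOME ML output misses more than alpha*K defectives. *)
Definition err_prob (N K T : nat) (alpha : R) : R :=
  \sum_(S in ksubsets N K) \sum_(X : design N T)
    ('C(N, K)%:R)^-1 * design_prob K X *
    (if [exists S', ML_output K X (outcome X S) S' && misses_too_many K alpha S S']
     then 1 else 0).

End GroupTesting.

From HB Require Import structures.
From mathcomp Require Import all_boot all_order all_algebra.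
From mathcomp Require Import all_classical all_reals all_analysis.
From mathcomp Require Import lra zify.
Import Order.TTheory GRing.Theory Num.Theory numFieldNormedType.Exports.
Local Open Scope classical_set_scope.
Local Open Scope ring_scope.
Set Implicit Arguments. Unset Strict Implicit.

(* Union bound over the wrong K-sets S' missing more than alpha K defectives.
   A single Bernoulli(1/K) test separates S from such an S' when it avoids S'
   but hits S :\: S', which happens with probability
   (1 - 1/K)^K (1 - (1 - 1/K)^(alpha K)) >= c := e^-2 (1 - e^-alpha).  Hence
   the error probability is at most C(N, K) (1 - c)^T <= N^K e^(-c T), which
   is O(1/N) for T = (2/c) K ln N. *)

Section BernoulliVectors.
Variable R : realFieldType.

Definition indR (b : bool) : R := if b then 1 else 0.

Lemma indR_ge0 b : 0 <= indR b.
Proof. by case: b; rewrite /indR. Qed.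

Lemma indR_forall (I : finType) (P : pred I) :
  indR [forall i, P i] = \prod_i indR (P i).
Proof.
case: (boolP [forall i, P i]) => [/forallP allP | /forallPn [i notPi]].
  by rewrite big1 // => i _; rewrite /indR allP.
by rewrite (bigD1 i) //= /indR (negbTE notPi) mul0r.
Qed.

Definition bernoulli_weight (p : R) (b : bool) : R := if b then p else 1 - p.

Definition bernoulli_prob N (p : R) (x : {ffun 'I_N -> bool}) : R :=
  \prod_i bernoulli_weight p (x i).

Variables (N : nat) (p : R).

Lemma bernoulli_prob_ge0 (x : {ffun 'I_N -> bool}) :
  0 <= p <= 1 -> 0 <= bernoulli_prob p x.
Proof.
case/andP=> p0 p1; apply: prodr_ge0 => i _; rewrite /bernoulli_weight.
by case: (x i); rewrite ?subr_ge0.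
Qed.

Lemma bernoulli_prob_all_false (A : {set 'I_N}) :
  \sum_(x : {ffun 'I_N -> bool}) bernoulli_prob p x * indR [forall j in A, ~~ x j]
  = (1 - p) ^+ #|A|.
Proof.
pose F i b := bernoulli_weight p b * indR ((i \in A) ==> ~~ b).
transitivity (\sum_(x : {ffun 'I_N -> bool}) \prod_i F i (x i)).
  by apply: eq_bigr => x _; rewrite indR_forall -big_split.
rewrite -(bigA_distr_bigA F) (eq_bigr (fun i => if i \in A then 1 - p else 1)).
  by rewrite -big_mkcond prodr_const.
move=> i _; rewrite big_bool /F /bernoulli_weight /indR.
by case: (i \in A); rewrite /= ?mulr1 ?mulr0 ?add0r // subrKC.
Qed.

Lemma bernoulli_prob_sum1 : \sum_(x : {ffun 'I_N -> bool}) bernoulli_prob p x = 1.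
Proof.
rewrite -[RHS](expr0 (1 - p)) -(cards0 'I_N) -bernoulli_prob_all_false.
apply: eq_bigr => x _; rewrite /indR.
by case: forall_inP => [|[] j]; rewrite ?mulr1 ?inE.
Qed.

Definition indistinguishable (S S' : {set 'I_N}) (x : {ffun 'I_N -> bool}) :=
  [exists j in S', x j] == [exists j in S, x j].

Lemma indR_indistinguishable_le (S S' : {set 'I_N}) x :
  indR (indistinguishable S S' x) <=
  1 - indR [forall j in S', ~~ x j] + indR [forall j in S' :|: S, ~~ x j].
Proof.
have existsE A : [exists j in A, x j] = ~~ [forall j in A, ~~ x j].
  by rewrite negb_forall_in; apply: eq_existsb => j; rewrite negbK.
have forallU : [forall j in S' :|: S, ~~ x j] =
               [forall j in S', ~~ x j] && [forall j in S, ~~ x j].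
  apply/forall_inP/andP => [allU | [/forall_inP allS' /forall_inP allS] j].
    by split; apply/forall_inP => j jA; apply: allU; rewrite inE jA ?orbT.
  by rewrite inE => /orP[]; [apply: allS' | apply: allS].
rewrite /indistinguishable !existsE forallU /indR.
by case: [forall j in S', _]; case: [forall j in S, _] => /=; lra.
Qed.

Lemma bernoulli_prob_indistinguishable_le (S S' : {set 'I_N}) : 0 <= p <= 1 ->
  \sum_(x : {ffun 'I_N -> bool}) bernoulli_prob p x * indR (indistinguishable S S' x)
  <= 1 - (1 - p) ^+ #|S'| + (1 - p) ^+ #|S' :|: S|.
Proof.
move=> p01; rewrite -!bernoulli_prob_all_false -[X in X - _ + _]bernoulli_prob_sum1.
rewrite -sumrB -big_split /=.
apply: ler_sum => x _.
have := indR_indistinguishable_le S S' x; have := bernoulli_prob_ge0 x p01; nra.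
Qed.

End BernoulliVectors.

Arguments indR {R} b.

Section Designs.
Variables (R : realType) (N T : nat).

Definition design_of_tests (F : {ffun 'I_T -> {ffun 'I_N -> bool}}) : design N T :=
  [ffun jt => F jt.2 jt.1].

Lemma design_of_tests_bij : bijective design_of_tests.
Proof.
exists (fun X : design N T => [ffun t => [ffun j => X (j, t)]]) => [F|X].
  by apply/ffunP => t; apply/ffunP => j; rewrite !ffunE.
by apply/ffunP => -[j t]; rewrite !ffunE.
Qed.

Lemma design_prob_of_tests K F :
  design_prob R K (design_of_tests F) = \prod_t bernoulli_prob K%:R^-1 (F t).
Proof.
rewrite /design_prob /bernoulli_prob exchange_big pair_bigA /=.
by apply: eq_bigr => -[j t] _; rewrite ffunE.
Qed.

Lemma outcome_of_tests_eq (S S' : {set 'I_N}) F :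
  (outcome (design_of_tests F) S' == outcome (design_of_tests F) S) =
  [forall t, indistinguishable S S' (F t)].
Proof.
have outcomeE A t : outcome (design_of_tests F) A t = [exists j in A, F t j].
  by rewrite ffunE; apply: eq_existsb => j; rewrite ffunE.
apply/eqP/forallP => [E t | E]; first by rewrite /indistinguishable -!outcomeE E.
by apply/ffunP => t; rewrite !outcomeE; apply: eqP (E t).
Qed.

Lemma design_prob_indistinguishable K (S S' : {set 'I_N}) :
  \sum_(X : design N T) design_prob R K X * indR (outcome X S' == outcome X S) =
  (\sum_(x : {ffun 'I_N -> bool})
     bernoulli_prob K%:R^-1 x * indR (indistinguishable S S' x)) ^+ T.
Proof.
rewrite (reindex design_of_tests) /=; last exact: onW_bij design_of_tests_bij.
under eq_bigr => F _ do
  rewrite design_prob_of_tests outcome_of_tests_eq indR_forall -big_split.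
by rewrite -(bigA_distr_bigA (fun t x => bernoulli_prob K%:R^-1 x *
                                          indR (indistinguishable S S' x)))
           prodr_const card_ord.
Qed.

End Designs.

Section ErrorBound.
Variable R : realType.

Lemma invn_itv01 K : (0 < K)%N -> 0 <= (K%:R : R)^-1 <= 1.
Proof.
by move=> K0; rewrite invr_ge0 ler0n invr_le1 ?ler1n ?ltr0n ?unitfE ?pnatr_eq0 -?lt0n.
Qed.

Lemma design_prob_ge0 N T K (X : design N T) :
  (0 < K)%N -> 0 <= design_prob R K X.
Proof.
move=> /invn_itv01 /andP[p0 p1]; apply: prodr_ge0 => jt _.
by case: (X jt); rewrite ?subr_ge0.
Qed.

Lemma expRN2_le_pow_one_sub_inv K :
  (2 <= K)%N -> expR (-2) <= (1 - K%:R^-1 : R) ^+ K.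
Proof.
move=> K2; have K0 : (0 : R) < K%:R by rewrite ltr0n; lia.
set x : R := K%:R^-1.
have x0 : 0 <= x by rewrite invr_ge0 ltW.
have x_le_half : x <= 2^-1 by rewrite /x lef_pV2 ?posrE // ler_nat.
(* 1 - x >= exp(-2x) on [0, 1/2], from exp(2x) (1 - x) >= (1 + 2x)(1 - x) >= 1 *)
have exp_le : expR (- (2 * x)) <= 1 - x.
  rewrite expRN -[_^-1]mul1r ler_pdivrMr ?expR_gt0 //.
  have := expR_ge1Dx (2 * x); nra.
have -> : expR (-2) = expR (- (2 * x)) ^+ K.
  by rewrite -expRM_natl mulrN mulrCA mulfV ?mulr1 ?gt_eqF.
apply: (lerXn2r K) exp_le; rewrite nnegrE ?expR_ge0 //.
by rewrite subr_ge0 (le_trans x_le_half) // invf_le1 // ler1n.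
Qed.

Lemma pow_one_sub_inv_le_expRN K m (alpha : R) : (0 < K)%N ->
  alpha * K%:R < m%:R -> (1 - K%:R^-1) ^+ m <= expR (- alpha).
Proof.
move=> K0 alpha_lt_m; have /andP[_ x1] := invn_itv01 K0.
have K0' : (0 : R) < K%:R by rewrite ltr0n.
apply: (@le_trans _ _ (expR (- K%:R^-1) ^+ m)).
  by apply: (lerXn2r m) (expR_ge1Dx _); rewrite nnegrE ?subr_ge0 ?expR_ge0.
rewrite -expRM_natl ler_expR mulrN lerN2 -(ler_pM2r K0') -mulrA mulVf ?gt_eqF //.
by rewrite mulr1 ltW.
Qed.

Definition separation_gap (alpha : R) : R := expR (-2) * (1 - expR (- alpha)).

Lemma separation_gap_itv alpha : 0 < alpha -> 0 < separation_gap alpha <= 1.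
Proof.
move=> alpha0.
have e1 : expR (- alpha) < 1 by rewrite -expR0 ltr_expR oppr_lt0.
have e2 : expR (-2) <= 1 :> R by rewrite -[leRHS]expR0 ler_expR; lra.
have := expR_gt0 (-2 : R); have := expR_ge0 (- alpha).
by rewrite /separation_gap; nra.
Qed.

(* Per-test confusion probability, with q = 1 - 1/K, #|S'| = K,
   #|S' :|: S| = u and #|S :\: S'| = m. *)
Lemma test_confusion_le K m u alpha : (2 <= K)%N -> 0 < alpha ->
  alpha * K%:R < m%:R -> (K + m <= u)%N ->
  1 - (1 - K%:R^-1) ^+ K + (1 - K%:R^-1) ^+ u <= 1 - separation_gap alpha.
Proof.
move=> K2 alpha0 alpha_lt_m Kmu.
have /andP[x0 x1] := invn_itv01 (ltnW K2).
set q := 1 - K%:R^-1.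
have q0 : 0 <= q by rewrite subr_ge0.
have q1 : q <= 1 by rewrite lerBlDr lerDl.
have qu_le : q ^+ u <= q ^+ K * q ^+ m.
  rewrite -exprD -(subnKC Kmu) exprD ler_piMr ?exprn_ge0 ?exprn_ile1 //.
have qK_ge := expRN2_le_pow_one_sub_inv K2.
have qm_le := pow_one_sub_inv_le_expRN (ltnW K2) alpha_lt_m.
have e1 : expR (- alpha) < 1 by rewrite -expR0 ltr_expR oppr_lt0.
have : separation_gap alpha <= q ^+ K * (1 - q ^+ m).
  by apply: ler_pM; rewrite ?expR_ge0 ?lerB //; lra.
have := exprn_ge0 m q0; nra.
Qed.

Lemma prob_confused_le N T K (alpha : R) (S S' : {set 'I_N}) :
  (2 <= K)%N -> 0 < alpha -> S \in ksubsets N K -> S' \in ksubsets N K ->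
  \sum_(X : design N T) design_prob R K X *
     indR (misses_too_many K alpha S S' && (outcome X S' == outcome X S))
  <= (1 - separation_gap alpha) ^+ T.
Proof.
move=> K2 alpha0; rewrite !inE => /eqP cardS /eqP cardS'.
have /andP[_ gap1] := separation_gap_itv alpha0.
have gap_compl0 : 0 <= 1 - separation_gap alpha by rewrite subr_ge0.
case miss: (misses_too_many K alpha S S'); last first.
  by rewrite big1 ?exprn_ge0 // => X _; rewrite /indR mulr0.
rewrite design_prob_indistinguishable.
have p01 := invn_itv01 (ltnW K2).
apply: (lerXn2r T); rewrite ?nnegrE //.
  by apply: sumr_ge0 => x _; rewrite mulr_ge0 ?indR_ge0 ?bernoulli_prob_ge0.
apply: le_trans (bernoulli_prob_indistinguishable_le S S' p01) _.
rewrite cardS'; apply: test_confusion_le miss _ => //.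
have := cardsD S S'; have := subset_leq_card (subsetIl S S').
have := cardsUI S' S; rewrite finset.setIC cardS cardS'; lia.
Qed.

Lemma ML_error_le_sum_confused N T K (alpha : R) (S : {set 'I_N})
    (X : design N T) :
  S \in ksubsets N K ->
  (if [exists S', ML_output R K X (outcome X S) S' && misses_too_many K alpha S S']
   then 1 else 0 : R) <=
  \sum_(S' in ksubsets N K)
     indR (misses_too_many K alpha S S' && (outcome X S' == outcome X S)).
Proof.
move=> SK.
case: existsP => [[S' /andP[/andP[S'K /forall_inP ML] miss]] | _]; last first.
  by apply: sumr_ge0 => S' _; exact: indR_ge0.
(* S itself explains the outcome, so every ML output must explain it too *)
have := ML S SK; rewrite /lik eqxx.
case: eqP => [S'_explains _ | _]; last by rewrite ler10.
rewrite (bigD1 S') //= miss S'_explains eqxx lerDl.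
by apply: sumr_ge0 => ? _; exact: indR_ge0.
Qed.

Lemma err_prob_le N K T (alpha : R) : (2 <= K)%N -> 0 < alpha ->
  err_prob N K T alpha <= 'C(N, K)%:R * (1 - separation_gap alpha) ^+ T.
Proof.
move=> K2 alpha0.
have card_ksubsets : #|ksubsets N K| = 'C(N, K) by rewrite card_draws card_ord.
set e := (1 - separation_gap alpha) ^+ T; set C : R := 'C(N, K)%:R.
have Cinv0 : 0 <= C^-1 by rewrite invr_ge0 ler0n.
apply: (@le_trans _ _ (\sum_(S in ksubsets N K) C^-1 * (C * e))).
  apply: ler_sum => S SK.
  apply: (@le_trans _ _ (\sum_(X : design N T) C^-1 * design_prob R K X *
      \sum_(S' in ksubsets N K)
        indR (misses_too_many K alpha S S' && (outcome X S' == outcome X S)))).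
    apply: ler_sum => X _; apply: ler_wpM2l; last exact: ML_error_le_sum_confused.
    by rewrite mulr_ge0 ?design_prob_ge0 // ltnW.
  under eq_bigr => X _ do rewrite -mulrA mulr_sumr.
  rewrite -mulr_sumr exchange_big /= ler_wpM2l // /C -card_ksubsets mulr_natl.
  by rewrite -sumr_const; apply: ler_sum => S' S'K; apply: prob_confused_le.
rewrite sumr_const card_ksubsets -mulr_natl -/C.
have [->|C0] := eqVneq C 0; first by rewrite !mul0r.
by rewrite mulrA mulfV // mul1r.
Qed.

Lemma err_prob_ge0 N K T (alpha : R) : (0 < K)%N -> 0 <= err_prob N K T alpha.
Proof.
move=> K0; apply: sumr_ge0 => S _; apply: sumr_ge0 => X _.
apply: mulr_ge0; last by case: ifP.
by rewrite mulr_ge0 ?invr_ge0 ?ler0n ?design_prob_ge0.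
Qed.

Lemma bin_leq_expn n k : ('C(n, k) <= n ^ k)%N.
Proof.
have ffact_le : (n ^_ k <= n ^ k)%N.
  by elim: k => [|k IHk] //; rewrite ffactnSr expnSr leq_mul // leq_subr.
by rewrite (leq_trans _ ffact_le) // -bin_ffact leq_pmulr ?fact_gt0.
Qed.

Lemma bin_mul_geometric_le n K T (c : R) : (2 <= K)%N -> 0 < c <= 1 ->
  2 * K%:R * ln (n%:R : R) < c * T.+1%:R ->
  'C(n, K)%:R * (1 - c) ^+ T <= expR c * n.+1%:R^-1.
Proof.
move=> K2 /andP[c0 c1] T_large.
have [n_lt_K | K_le_n] := ltnP n K.
  by rewrite bin_small // mul0r mulr_ge0 ?expR_ge0 ?invr_ge0.
have n0 : (0 : R) < n%:R by rewrite ltr0n; lia.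
set L := ln (n%:R : R) in T_large *.
have nE : n%:R = expR L by rewrite lnK ?posrE.
have bin_le : 'C(n, K)%:R <= expR (K%:R * L) :> R.
  by rewrite expRM_natl -nE -natrX ler_nat bin_leq_expn.
have geom_le : (1 - c) ^+ T <= expR (c - 2 * (K%:R * L)).
  apply: (@le_trans _ _ (expR (- c) ^+ T)).
    by apply: (lerXn2r T) (expR_ge1Dx _); rewrite nnegrE ?subr_ge0 ?expR_ge0.
  by rewrite -expRM_natl ler_expR; move: T_large; rewrite -natr1; lra.
apply: (le_trans (ler_pM (ler0n _ _) (exprn_ge0 _ _) bin_le geom_le)); first lra.
rewrite -expRD (_ : _ + _ = c - K%:R * L); last lra.
rewrite expRD expRN expRM_natl -nE ler_wpM2l ?expR_ge0 //.
rewrite lef_pV2 ?posrE ?ltr0n ?exprn_gt0 // -natrX ler_nat.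
by rewrite (@leq_trans (n ^ 2)) ?leq_pexp2l //; nia.
Qed.

End ErrorBound.

Theorem theorem6 (R : realType) (alpha : R) (halpha0 : 0 < alpha) (halpha1 : alpha < 1) :
  exists C : R, 0 < C /\
    forall K : nat -> nat,
      (forall M : nat, \forall n \near \oo, (M <= K n)%N) ->
      ((fun n : nat => (K n)%:R / n%:R : R) @ \oo --> (0 : R)) ->
      exists T : nat -> nat,
        (forall n : nat, (T n)%:R <= C * (K n)%:R * ln (n%:R : R)) /\
        ((fun n : nat => err_prob n (K n) (T n) alpha) @ \oo --> (0 : R)).
Proof.
have /andP[c0 c1] := separation_gap_itv halpha0.
set c := separation_gap alpha in c0 c1 *.
exists (2 / c); split; first by rewrite divr_gt0.
move=> K K_large _.
pose tests n := 2 / c * (K n)%:R * ln (n%:R : R).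
have tests_ge0 n : 0 <= tests n.
  have ln_n_ge0 : 0 <= ln (n%:R : R).
    by case: n => [|n]; [rewrite mulr0n ln0 | apply: ln_ge0; rewrite ler1n].
  by rewrite !mulr_ge0 // invr_ge0 ltW.
exists (fun n => Num.Def.trunc (tests n)).
split=> [n|]; first by rewrite truncn_le tests_ge0.
apply: (@squeeze_cvgr _ _ _ _ (fun _ => 0) (fun n => expR c * harmonic n));
  last 2 first.
- exact: cvg_cst.
- by rewrite -(mulr0 (expR c)); apply: cvgMl_tmp; exact: cvg_harmonic.
near=> n; have K2 : (2 <= K n)%N by near: n; exact: K_large 2.
rewrite err_prob_ge0 ?(ltnW K2) //=.
apply: le_trans (err_prob_le _ _ K2 halpha0) _.
apply: bin_mul_geometric_le => //; first by rewrite c0 c1.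
rewrite (_ : 2 * _ * _ = c * tests n) ?ltr_pM2l ?truncnS_gt //.
by rewrite /tests !mulrA [c * 2]mulrC mulfK ?gt_eqF.
Unshelve. all: end_near.
Qed.
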